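(* Let $f\colon S^1\to S^1$ be a homeomorphism of the circle such that the restriction $f|_{\Omega(f)}$ of $f$ to its nonwandering set has the pseudo-orbit tracing property. Then $f$ has a periodic point.
   Context: The nonwandering set $\Omega(f)$ is the set of $x$ such that for every neighborhood $U$ of $x$ there is $n\ge1$ with $f^n(U)\cap U\neq\emptyset$; it is compact and $f$-invariant. For a homeomorphism $g\colon Y\to Y$ of a metric space $(Y,d)$: a bi-infinite sequence $(x_i)_{i\in\mathbb{Z}}$ is a $\delta$-pseudo-orbit if $d(g(x_i),x_{i+1})\le\delta$ for all $i$; it is $\epsilon$-shadowed if there is $x\in Y$ with $d(g^i(x),x_i)\le\epsilon$ for all $i\in\mathbb{Z}$; $g$ has the pseudo-orbit tracing property if for every $\epsilon>0$ there is $\delta>0$ such that every $\delta$-pseudo-orbit can be $\epsilon$-shadowed. *)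

From Stdlib Require Import Reals ZArith.
Open Scope R_scope.

Definition S1 : Type := { p : R * R | (fst p) ^ 2 + (snd p) ^ 2 = 1 }.

Definition dist (a b : S1) : R :=
  sqrt ((fst (proj1_sig a) - fst (proj1_sig b)) ^ 2
        + (snd (proj1_sig a) - snd (proj1_sig b)) ^ 2).

Definition continuous_S1 (f : S1 -> S1) : Prop :=
  forall x (eps : R), eps > 0 ->
    exists delta, delta > 0 /\ forall y, dist x y < delta -> dist (f x) (f y) < eps.

Definition homeo_S1 (f g : S1 -> S1) : Prop :=
  continuous_S1 f /\ continuous_S1 g /\
  (forall x, g (f x) = x) /\ (forall x, f (g x) = x).

Definition ziter (f g : S1 -> S1) (i : Z) (x : S1) : S1 :=
  match i with
  | Z0 => x
  | Zpos p => Nat.iter (Pos.to_nat p) f x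
  | Zneg p => Nat.iter (Pos.to_nat p) g x
  end.

Definition nbhd (U : S1 -> Prop) (x : S1) : Prop :=
  exists r, r > 0 /\ forall y, dist x y < r -> U y.

Definition nonwandering (f : S1 -> S1) (x : S1) : Prop :=
  forall U : S1 -> Prop, nbhd U x ->
    exists n : nat, (n >= 1)%nat /\ exists y, U y /\ U (Nat.iter n f y).

(* Pseudo-orbit tracing property of the restriction of the homeomorphism f
   (inverse g) to an f-invariant set A, with the metric induced from S^1:
   sequences and shadowing points are required to lie in A. *)
Definition POTP_on (A : S1 -> Prop) (f g : S1 -> S1) : Prop :=
  forall eps, eps > 0 -> exists delta, delta > 0 /\
    forall xs : Z -> S1,
      (forall i, A (xs i)) ->
      (forall i, dist (f (xs i)) (xs (i + 1)%Z) <= delta) ->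
      exists x, A x /\ forall i, dist (ziter f g i x) (xs i) <= eps.

(* Pick a nonwandering point x with f^n x close to x.  The periodic pseudo-orbit
   x, f x, ..., f^(n-1) x, x, ... lies in the nonwandering set, so it is shadowed by some y.
   The returns z_k = f^(kn) y all lie on a short arc around x, and consecutive returns stay
   close along their whole orbits, so f^n carries the short arc [z_k, z_(k+1)] onto
   [z_(k+1), z_(k+2)].  In an angle coordinate around x, either the z_k move monotonically,
   and their limit is fixed by f^n, or they turn back at some k, and the intermediate value
   theorem gives a fixed point of f^n on [z_k, z_(k+1)]. *)

From Pilot Require Import Defs.
From Stdlib Require Import Reals ZArith Lia Psatz Rgeom Rtopology Ranalysis5.
From Stdlib Require Import ProofIrrelevance Classical IndefiniteDescription.
Open Scope R_scope.
Local Notation dist := Defs.dist.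

Definition X (a : S1) : R := fst (proj1_sig a).
Definition Y (a : S1) : R := snd (proj1_sig a).
Definition dot (a b : S1) : R := X a * X b + Y a * Y b.
Definition cross (a b : S1) : R := X a * Y b - Y a * X b.

Lemma S1_unit a : X a ^ 2 + Y a ^ 2 = 1.
Proof. exact (proj2_sig a). Qed.

Lemma S1_eq a b : X a = X b -> Y a = Y b -> a = b.
Proof.
  destruct a as [[a1 a2] Ha], b as [[b1 b2] Hb]; unfold X, Y; simpl; intros -> ->.
  f_equal; apply proof_irrelevance.
Qed.

Lemma dist_euclid a b : dist a b = dist_euc (X a) (Y a) (X b) (Y b).
Proof. unfold dist, dist_euc, Rsqr; f_equal; unfold X, Y; ring. Qed.

Lemma dist_ge0 a b : 0 <= dist a b.
Proof. apply sqrt_pos. Qed.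

Lemma dist_sym a b : dist a b = dist b a.
Proof. rewrite !dist_euclid; apply distance_symm. Qed.

Lemma dist_self a : dist a a = 0.
Proof. rewrite dist_euclid; apply distance_refl. Qed.

Lemma dist_triangle a b c : dist a c <= dist a b + dist b c.
Proof. rewrite !dist_euclid; apply triangle. Qed.

Lemma dot_le1 a b : dot a b <= 1.
Proof.
  pose proof (S1_unit a); pose proof (S1_unit b).
  pose proof (pow2_ge_0 (X a - X b)); pose proof (pow2_ge_0 (Y a - Y b)).
  unfold dot; nra.
Qed.

Lemma dist_dot a b : dist a b = sqrt (2 - 2 * dot a b).
Proof.
  unfold dist, dot; fold (X a) (X b) (Y a) (Y b); f_equal.
  pose proof (S1_unit a); pose proof (S1_unit b); nra.
Qed.

Lemma dist_sq a b : dist a b ^ 2 = 2 - 2 * dot a b.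
Proof.
  rewrite dist_dot, pow2_sqrt; [ring|].
  pose proof (dot_le1 a b); lra.
Qed.

Lemma dist_eq0 a b : dist a b = 0 -> a = b.
Proof.
  intro H; pose proof (dist_sq a b) as Hs; rewrite H in Hs.
  pose proof (S1_unit a); pose proof (S1_unit b).
  pose proof (pow2_ge_0 (X a - X b)); pose proof (pow2_ge_0 (Y a - Y b)).
  unfold dot in Hs; apply S1_eq; nra.
Qed.

Lemma dot_pos a b : dist a b < 1 -> 0 < dot a b.
Proof. intro H; pose proof (dist_sq a b); pose proof (dist_ge0 a b); nra. Qed.

Lemma cross_dot a b : cross a b ^ 2 + dot a b ^ 2 = 1.
Proof. unfold cross, dot; pose proof (S1_unit a); pose proof (S1_unit b); nra. Qed.

Lemma cross_self a : cross a a = 0.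
Proof. unfold cross; ring. Qed.

Lemma cross_lipschitz a u v : Rabs (cross a u - cross a v) <= dist u v.
Proof.
  rewrite <- (Rabs_pos_eq (dist u v)) by apply dist_ge0; apply Rsqr_le_abs_0.
  rewrite !Rsqr_pow2, dist_sq.
  pose proof (S1_unit a); pose proof (S1_unit u); pose proof (S1_unit v).
  pose proof (pow2_ge_0 (X a * (X u - X v) + Y a * (Y u - Y v))).
  assert (Lagrange : (cross a u - cross a v) ^ 2
            + (X a * (X u - X v) + Y a * (Y u - Y v)) ^ 2
          = (X a ^ 2 + Y a ^ 2) * ((X u - X v) ^ 2 + (Y u - Y v) ^ 2))
    by (unfold cross; ring).
  assert (Chord : (X u - X v) ^ 2 + (Y u - Y v) ^ 2 = 2 - 2 * dot u v)
    by (unfold dot; nra).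
  rewrite H, Chord, Rmult_1_l in Lagrange; lra.
Qed.

Lemma rot_unit p t :
  (X p * cos t - Y p * sin t) ^ 2 + (Y p * cos t + X p * sin t) ^ 2 = 1.
Proof.
  pose proof (S1_unit p) as Hp; pose proof (sin2_cos2 t) as Ht; unfold Rsqr in Ht.
  replace 1 with ((X p ^ 2 + Y p ^ 2) * (sin t * sin t + cos t * cos t)) by (rewrite Hp, Ht; ring).
  ring.
Qed.

Definition rot (p : S1) (t : R) : S1 :=
  exist _ (X p * cos t - Y p * sin t, Y p * cos t + X p * sin t) (rot_unit p t).

Lemma X_rot p t : X (rot p t) = X p * cos t - Y p * sin t.
Proof. reflexivity. Qed.

Lemma Y_rot p t : Y (rot p t) = Y p * cos t + X p * sin t.
Proof. reflexivity. Qed.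

Lemma rot_0 p : rot p 0 = p.
Proof. apply S1_eq; rewrite ?X_rot, ?Y_rot, cos_0, sin_0; ring. Qed.

Lemma rot_rot p s t : rot (rot p s) t = rot p (s + t).
Proof.
  apply S1_eq; repeat (rewrite X_rot || rewrite Y_rot); rewrite cos_plus, sin_plus; ring.
Qed.

Lemma cross_rot p t : cross p (rot p t) = sin t.
Proof.
  unfold cross; rewrite X_rot, Y_rot; pose proof (S1_unit p) as Hp.
  transitivity ((X p ^ 2 + Y p ^ 2) * sin t); [ring | rewrite Hp; ring].
Qed.

Lemma dot_rot_rot p s t : dot (rot p s) (rot p t) = cos (s - t).
Proof.
  unfold dot; rewrite !X_rot, !Y_rot, cos_minus; pose proof (S1_unit p) as Hp.
  transitivity ((X p ^ 2 + Y p ^ 2) * (cos s * cos t + sin s * sin t)); [ring | rewrite Hp; ring].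
Qed.

Lemma dot_rot p t : dot p (rot p t) = cos t.
Proof. rewrite <- (rot_0 p) at 1; rewrite dot_rot_rot, <- cos_neg; f_equal; ring. Qed.

Lemma Rabs_sin_le u : Rabs (sin u) <= Rabs u.
Proof.
  assert (Hpos : forall w, 0 <= w -> Rabs (sin w) <= w).
  { intros w Hw; destruct (Req_dec w 0) as [->|Hw0]; [rewrite sin_0, Rabs_R0; lra|].
    pose proof (sin_lt_x w ltac:(lra)); pose proof (SIN_bound w); pose proof PI2_1.
    destruct (Rle_dec 1 w); [apply Rabs_le; lra|].
    rewrite Rabs_pos_eq by (apply sin_ge_0; lra); lra. }
  destruct (Rle_dec 0 u).
  - rewrite (Rabs_pos_eq u) by lra; auto.
  - rewrite (Rabs_left u), <- Rabs_Ropp, <- sin_neg by lra; apply Hpos; lra.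
Qed.

Lemma dist_rot p s t : dist (rot p s) (rot p t) <= Rabs (s - t).
Proof.
  rewrite dist_dot, dot_rot_rot, <- sqrt_Rsqr_abs; apply sqrt_le_1_alt.
  (* 2 - 2 cos u = 4 sin (u/2)^2 *)
  set (u := s - t); replace u with (2 * (u / 2)) by field; rewrite cos_2a_sin.
  pose proof (Rsqr_le_abs_1 _ _ (Rabs_sin_le (u / 2))); unfold Rsqr in *.
  replace (2 * (u / 2) * (2 * (u / 2))) with (4 * (u / 2 * (u / 2))) by ring; lra.
Qed.

Definition ang (p q : S1) : R := asin (cross p q).

Lemma ang_bound p q : - (PI / 2) <= ang p q <= PI / 2.
Proof. apply asin_bound. Qed.

Lemma ang_self a : ang a a = 0.
Proof. unfold ang; rewrite cross_self; apply asin_0. Qed.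

Lemma ang_rot p t : - (PI / 2) <= t <= PI / 2 -> ang p (rot p t) = t.
Proof. intro Ht; unfold ang; rewrite cross_rot; apply asin_sin; lra. Qed.

Lemma cross_bound a b : 0 < dot a b -> -1 < cross a b < 1.
Proof. intro H; pose proof (cross_dot a b); split; nra. Qed.

Lemma rot_ang p q : 0 < dot p q -> rot p (ang p q) = q.
Proof.
  intro Hd; pose proof (cross_bound p q Hd) as Hc.
  assert (Ec : cos (ang p q) = dot p q).
  { unfold ang; rewrite cos_asin by lra.
    rewrite <- (sqrt_pow2 (dot p q)) by lra; f_equal.
    pose proof (cross_dot p q); unfold Rsqr; nra. }
  assert (Es : sin (ang p q) = cross p q) by (apply sin_asin; lra).
  pose proof (S1_unit p) as Hp.
  apply S1_eq; rewrite ?X_rot, ?Y_rot, Ec, Es; unfold dot, cross.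
  - transitivity ((X p ^ 2 + Y p ^ 2) * X q); [ring | rewrite Hp; ring].
  - transitivity ((X p ^ 2 + Y p ^ 2) * Y q); [ring | rewrite Hp; ring].
Qed.

Lemma ang_small p q : dist p q <= 1 / 2 -> Rabs (ang p q) < PI / 4.
Proof.
  intro H; pose proof (ang_bound p q) as Hb; pose proof PI_RGT_0.
  pose proof (cross_lipschitz p q p) as Hc.
  rewrite cross_self, Rminus_0_r, dist_sym in Hc.
  pose proof (Rle_abs (cross p q)); pose proof (Rle_abs (- cross p q)).
  rewrite Rabs_Ropp in *.
  assert (Hs : sin (ang p q) = cross p q).
  { apply sin_asin; pose proof (dist_ge0 p q); lra. }
  assert (S4 : 1 / 2 < sin (PI / 4)).
  { rewrite sin_PI4; pose proof (sqrt_sqrt 2 ltac:(lra)); pose proof (sqrt_pos 2).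
    apply (Rmult_lt_reg_r (sqrt 2)); [nra|]; field_simplify; nra. }
  apply Rabs_def1.
  - destruct (Rlt_dec (ang p q) (PI / 4)) as [|Hn]; [auto|exfalso].
    pose proof (sin_incr_1 (PI / 4) (ang p q)); lra.
  - destruct (Rlt_dec (- (PI / 4)) (ang p q)) as [|Hn]; [auto|exfalso].
    pose proof (sin_incr_1 (ang p q) (- (PI / 4))); rewrite sin_neg in *; lra.
Qed.

Lemma ang_add x p q :
  0 < dot x p -> 0 < dot p q ->
  Rabs (ang x p) < PI / 4 -> Rabs (ang p q) < PI / 4 ->
  ang x q = ang x p + ang p q.
Proof.
  intros Hxp Hpq Ha Hb; apply Rabs_def2 in Ha, Hb.
  rewrite <- (rot_ang p q Hpq), <- (rot_ang x p Hxp) at 1.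
  rewrite rot_rot; apply ang_rot; lra.
Qed.

Definition between (a b r : R) : Prop := Rmin a b <= r <= Rmax a b.

Lemma between_Rabs a b r M : between a b r -> Rabs a < M -> Rabs b < M -> Rabs r < M.
Proof.
  unfold between, Rmin, Rmax; intros Hr Ha Hb; apply Rabs_def2 in Ha, Hb.
  apply Rabs_def1; destruct (Rle_dec a b); lra.
Qed.

Lemma between_sym a b r : between a b r -> between b a r.
Proof. unfold between; rewrite Rmin_comm, Rmax_comm; auto. Qed.

Lemma between_shift a b r : between 0 a r <-> between b (b + a) (b + r).
Proof. unfold between, Rmin, Rmax; split; repeat destruct Rle_dec; lra. Qed.

Lemma cos_Rabs u : cos (Rabs u) = cos u.
Proof.
  destruct (Rle_dec 0 u); [rewrite Rabs_pos_eq | rewrite Rabs_left, cos_neg]; auto; lra.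
Qed.

Lemma dist_rot_between p q r :
  0 < dot p q -> between 0 (ang p q) r -> dist p (rot p r) <= dist p q.
Proof.
  intros Hd Hr; pose proof (ang_bound p q) as Hb; pose proof PI_RGT_0.
  rewrite <- (rot_ang p q Hd) at 1.
  rewrite !dist_dot, !dot_rot; apply sqrt_le_1_alt.
  assert (Hle : Rabs r <= Rabs (ang p q)).
  { unfold between, Rmin, Rmax in Hr; destruct (Rle_dec 0 (ang p q)).
    - rewrite !Rabs_pos_eq; lra.
    - rewrite !Rabs_left1; lra. }
  assert (Rabs (ang p q) <= PI / 2) by (apply Rabs_le; lra).
  pose proof (Rabs_pos r).
  rewrite <- (cos_Rabs r), <- (cos_Rabs (ang p q)).
  pose proof (cos_decr_1 (Rabs r) (Rabs (ang p q))); lra.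
Qed.

Lemma continuous_iter k n : continuous_S1 k -> continuous_S1 (Nat.iter n k).
Proof.
  intro Hk; induction n as [|n IH]; simpl; intros x eps He.
  - exists eps; auto.
  - destruct (Hk (Nat.iter n k x) eps He) as [d1 [Hd1 H1]].
    destruct (IH x d1 Hd1) as [d2 [Hd2 H2]].
    exists d2; split; auto; intros y Hy; apply H1, H2, Hy.
Qed.

Lemma continuity_pt_ang_comp k a p r :
  continuous_S1 k -> 0 < dot a (k (rot p r)) ->
  continuity_pt (fun s => ang a (k (rot p s))) r.
Proof.
  intros Hk Hd; unfold ang.
  apply (continuity_pt_comp (fun s => cross a (k (rot p s))) asin).
  - intros eps He; destruct (Hk (rot p r) eps He) as [d [Hd' H]].
    exists d; split; auto; intros s [_ Hs]; simpl; unfold R_dist.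
    eapply Rle_lt_trans; [apply cross_lipschitz|].
    rewrite dist_sym; apply H.
    eapply Rle_lt_trans; [apply dist_rot|]; rewrite Rabs_minus_sym; exact Hs.
  - apply derivable_continuous_pt, derivable_pt_asin, cross_bound; auto.
Qed.

Lemma IVT_interval (F : R -> R) a b :
  a <= b -> (forall z, a <= z <= b -> continuity_pt F z) -> F a * F b <= 0 ->
  exists z, a <= z <= b /\ F z = 0.
Proof.
  intros Hab Hc Hp.
  destruct (Req_dec (F a) 0) as [Ha|Ha]; [exists a; split; [lra|auto]|].
  destruct (Req_dec (F b) 0) as [Hb|Hb]; [exists b; split; [lra|auto]|].
  destruct (Req_dec a b) as [<-|Hne]; [nra|].
  destruct (Rlt_dec (F a) 0).
  - destruct (IVT_interv F a b Hc) as [z Hz]; [lra|lra|nra|eauto].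
  - destruct (IVT_interv (fun x => - F x) a b) as [z Hz]; [|lra|nra|nra|].
    + intros; apply continuity_pt_opp; auto.
    + exists z; split; [tauto|lra].
Qed.

Lemma IVT_interval_value (F : R -> R) a b v :
  a <= b -> (forall z, a <= z <= b -> continuity_pt F z) -> (F a - v) * (F b - v) <= 0 ->
  exists z, a <= z <= b /\ F z = v.
Proof.
  intros Hab Hc Hp.
  destruct (IVT_interval (fun x => F x - v) a b Hab) as [z [Hz Hz']]; auto.
  - intros; apply continuity_pt_minus, continuity_pt_const; auto; intros ? ?; auto.
  - exists z; split; auto; lra.
Qed.

Section ContinuousInjective.
Variables (F : R -> R) (a b : R).
Hypothesis Hab : a <= b.
Hypothesis HF : forall z, a <= z <= b -> continuity_pt F z.
Hypothesis F_inj : forall u v, a <= u <= b -> a <= v <= b -> F u = F v -> u = v.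

(* A value below both endpoint values would be taken twice, once on each side of [r]. *)
Lemma continuous_injective_ge_min r : a <= r <= b -> Rmin (F a) (F b) <= F r.
Proof.
  intro Hr; apply Rnot_lt_le; intro Hlt.
  pose proof (Rmin_l (F a) (F b)); pose proof (Rmin_r (F a) (F b)).
  set (v := (Rmin (F a) (F b) + F r) / 2).
  destruct (IVT_interval_value F a r v) as [z1 [Hz1 E1]];
    [lra | intros; apply HF; lra | unfold v; nra |].
  destruct (IVT_interval_value F r b v) as [z2 [Hz2 E2]];
    [lra | intros; apply HF; lra | unfold v; nra |].
  assert (z1 = z2) by (apply F_inj; [lra|lra|congruence]).
  assert (z1 = r) by lra; subst; unfold v in E1; lra.
Qed.

End ContinuousInjective.

Lemma continuous_injective_between (F : R -> R) a b :
  a <= b -> (forall z, a <= z <= b -> continuity_pt F z) ->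
  (forall u v, a <= u <= b -> a <= v <= b -> F u = F v -> u = v) ->
  forall r, a <= r <= b -> between (F a) (F b) (F r).
Proof.
  intros Hab HF F_inj r Hr; split; [now apply continuous_injective_ge_min|].
  assert (Hneg : Rmin (- F a) (- F b) <= - F r).
  { apply (continuous_injective_ge_min (fun x => - F x) a b); auto.
    - intros; apply continuity_pt_opp; auto.
    - intros u v Hu Hv E; apply F_inj; auto; lra. }
  rewrite <- Ropp_Rmax in Hneg; lra.
Qed.

Definition cluster_point (u : nat -> S1) (c : S1) : Prop :=
  forall r, 0 < r -> forall N, exists m, (N <= m)%nat /\ dist (u m) c < r.

Lemma S1_coord_bound a : -1 <= X a <= 1 /\ -1 <= Y a <= 1.
Proof. pose proof (S1_unit a); split; split; nra. Qed.

Lemma inv_INR_small e : 0 < e -> exists k : nat, / (INR k + 1) < e.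
Proof.
  intro He; destruct (archimed_cor1 e He) as [k [Hk Hk0]]; exists k.
  eapply Rle_lt_trans; [|exact Hk]; apply Rinv_le_contravar; [apply lt_0_INR; lia | lra].
Qed.

Lemma inv_INR_decr (k k' : nat) : (k <= k')%nat -> / (INR k' + 1) <= / (INR k + 1).
Proof.
  intro H; apply le_INR in H; pose proof (pos_INR k).
  apply Rinv_le_contravar; lra.
Qed.

Lemma ValAdh_near u l : ValAdh u l ->
  forall d, 0 < d -> forall N, exists m, (N <= m)%nat /\ Rabs (u m - l) < d.
Proof.
  intros H d Hd N; destruct (H (fun y => Rabs (y - l) < d) N) as [m Hm]; eauto.
  exists (mkposreal d Hd); intros y Hy; exact Hy.
Qed.

Lemma square_cluster (u v : nat -> R) :
  (forall m, -1 <= u m <= 1) -> (forall m, -1 <= v m <= 1) ->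
  exists l1 l2, forall e, 0 < e -> forall N, exists m,
    (N <= m)%nat /\ Rabs (u m - l1) < e /\ Rabs (v m - l2) < e.
Proof.
  intros Hu Hv.
  destruct (Bolzano_Weierstrass u _ (compact_P3 (-1) 1) Hu) as [l1 Hl1].
  assert (Hs : forall k : nat, exists m, (k <= m)%nat /\ Rabs (u m - l1) < / (INR k + 1)).
  { intro k; apply ValAdh_near; auto; apply Rinv_0_lt_compat; pose proof (pos_INR k); lra. }
  destruct (functional_choice _ Hs) as [sigma Hsig].
  destruct (Bolzano_Weierstrass (fun k => v (sigma k)) _ (compact_P3 (-1) 1)) as [l2 Hl2]; auto.
  exists l1, l2; intros e He N.
  destruct (inv_INR_small e He) as [k Hk].
  destruct (ValAdh_near _ _ Hl2 e He (max N k)) as [k' [Hk' Hy]].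
  destruct (Hsig k') as [Hs1 Hs2]; pose proof (inv_INR_decr k k' ltac:(lia)).
  exists (sigma k'); repeat split; auto; [lia | lra].
Qed.

Lemma unit_circle_closed l1 l2 :
  (forall e, 0 < e -> exists w : S1, Rabs (X w - l1) < e /\ Rabs (Y w - l2) < e) ->
  l1 ^ 2 + l2 ^ 2 = 1.
Proof.
  intro Hnear; destruct (Req_dec (l1 ^ 2 + l2 ^ 2) 1) as [|Hne]; auto; exfalso.
  set (D := Rabs (l1 ^ 2 + l2 ^ 2 - 1)); assert (HD : 0 < D) by (apply Rabs_pos_lt; lra).
  pose proof (Rmin_l 1 (D / 10)); pose proof (Rmin_r 1 (D / 10)); set (e := Rmin 1 (D / 10)) in *.
  destruct (Hnear e ltac:(apply Rmin_pos; lra)) as [w [H1 H2]].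
  destruct (S1_coord_bound w) as [Bx By]; pose proof (S1_unit w) as Hw.
  apply Rabs_def2 in H1, H2.
  assert (Hsq : forall l a, -1 <= a <= 1 -> a - l < e /\ - e < a - l ->
                 Rabs (l ^ 2 - a ^ 2) <= 3 * e).
  { intros l a Ha Hl.
    replace (l ^ 2 - a ^ 2) with ((l - a) * (l + a)) by ring; rewrite Rabs_mult.
    assert (Rabs (l - a) <= e) by (apply Rabs_le; lra).
    assert (Rabs (l + a) <= 3) by (apply Rabs_le; lra).
    pose proof (Rabs_pos (l - a)); pose proof (Rabs_pos (l + a)); nra. }
  pose proof (Hsq l1 (X w) Bx H1); pose proof (Hsq l2 (Y w) By H2).
  assert (D <= 6 * e); [|lra].
  unfold D; replace (l1 ^ 2 + l2 ^ 2 - 1) with ((l1 ^ 2 - X w ^ 2) + (l2 ^ 2 - Y w ^ 2)) by lra.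
  eapply Rle_trans; [apply Rabs_triang | lra].
Qed.

Lemma S1_cluster (u : nat -> S1) : exists c, cluster_point u c.
Proof.
  destruct (square_cluster (fun m => X (u m)) (fun m => Y (u m))) as [l1 [l2 Hl]];
    try (intro; apply S1_coord_bound).
  assert (Hunit : l1 ^ 2 + l2 ^ 2 = 1).
  { apply unit_circle_closed; intros e He; destruct (Hl e He 0%nat) as [m [_ Hm]]; eauto. }
  set (c := exist _ (l1, l2) Hunit : S1).
  assert (Xc : X c = l1) by reflexivity; assert (Yc : Y c = l2) by reflexivity.
  exists c; intros r Hr N.
  destruct (Hl (r / 2) ltac:(lra) N) as [m [Hm [H1 H2]]]; exists m; split; auto.
  apply Rabs_def2 in H1, H2.
  rewrite dist_euclid; unfold dist_euc; rewrite Xc, Yc, <- (sqrt_pow2 r) by lra.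
  apply sqrt_lt_1_alt; unfold Rsqr.
  assert ((X (u m) - l1) * (X (u m) - l1) < r / 2 * (r / 2)) by nra.
  assert ((Y (u m) - l2) * (Y (u m) - l2) < r / 2 * (r / 2)) by nra.
  replace (r ^ 2) with (4 * (r / 2 * (r / 2))) by field.
  pose proof (Rle_0_sqr (X (u m) - l1)); pose proof (Rle_0_sqr (Y (u m) - l2)); unfold Rsqr in *.
  split; lra.
Qed.

Lemma uniform_continuity k : continuous_S1 k ->
  forall eps, 0 < eps -> exists eta, 0 < eta /\
    forall u v, dist u v < eta -> dist (k u) (k v) < eps.
Proof.
  intros Hk eps He; apply NNPP; intro Hn.
  assert (Hbad : forall m : nat, exists uv : S1 * S1,
    dist (fst uv) (snd uv) < / (INR m + 1) /\ eps <= dist (k (fst uv)) (k (snd uv))).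
  { intro m; apply NNPP; intro Hm; apply Hn; exists (/ (INR m + 1)); split.
    - apply Rinv_0_lt_compat; pose proof (pos_INR m); lra.
    - intros u v Huv; apply Rnot_le_lt; intro Hle; apply Hm; exists (u, v); auto. }
  destruct (functional_choice _ Hbad) as [W HW].
  destruct (S1_cluster (fun m => fst (W m))) as [c Hc].
  destruct (Hk c (eps / 2) ltac:(lra)) as [rho [Hrho Hkc]].
  destruct (inv_INR_small (rho / 2) ltac:(lra)) as [k0 Hk0].
  destruct (Hc (rho / 2) ltac:(lra) k0) as [m [Hm1 Hm2]]; simpl in Hm2.
  destruct (HW m) as [W1 W2]; pose proof (inv_INR_decr k0 m Hm1).
  rewrite dist_sym in Hm2.
  pose proof (dist_triangle c (fst (W m)) (snd (W m))).
  pose proof (Hkc (fst (W m)) ltac:(lra)); pose proof (Hkc (snd (W m)) ltac:(lra)).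
  pose proof (dist_triangle (k (fst (W m))) (k c) (k (snd (W m)))).
  rewrite (dist_sym (k (fst (W m))) (k c)) in *; lra.
Qed.

Lemma S1_one_unit : fst (1, 0) ^ 2 + snd (1, 0) ^ 2 = 1.
Proof. simpl; ring. Qed.

Definition S1_one : S1 := exist _ (1, 0) S1_one_unit.

Section Nonwandering.
Variable f : S1 -> S1.
Hypothesis f_cont : continuous_S1 f.

Lemma nonwandering_image x : nonwandering f x -> nonwandering f (f x).
Proof.
  intros Hx U [r [Hr HU]].
  destruct (f_cont x r Hr) as [rho [Hrho Hc]].
  destruct (Hx (fun w => dist x w < rho)) as [n [Hn [y [Hy1 Hy2]]]]; [exists rho; auto|].
  exists n; split; auto; exists (f y); split; [apply HU, Hc, Hy1|].
  rewrite <- Nat.iter_succ_r, Nat.iter_succ; apply HU, Hc, Hy2.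
Qed.

Lemma nonwandering_iter x m : nonwandering f x -> nonwandering f (Nat.iter m f x).
Proof. intro Hx; induction m; simpl; auto using nonwandering_image. Qed.

Lemma cluster_point_orbit_nonwandering z c :
  cluster_point (fun m => Nat.iter m f z) c -> nonwandering f c.
Proof.
  intros Hc U [r [Hr HU]].
  destruct (Hc r Hr 0%nat) as [m1 [_ H1]]; destruct (Hc r Hr (S m1)) as [m2 [Hm2 H2]].
  exists (m2 - m1)%nat; split; [lia|]; exists (Nat.iter m1 f z).
  rewrite <- Nat.iter_add, Nat.sub_add by lia.
  split; apply HU; rewrite dist_sym; auto.
Qed.

(* [x] is an iterate of a cluster point of an orbit, and such cluster points are nonwandering. *)
Lemma nonwandering_almost_periodic d : 0 < d ->
  exists x n, nonwandering f x /\ (n >= 1)%nat /\ dist (Nat.iter n f x) x < d.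
Proof.
  intro Hd.
  destruct (S1_cluster (fun m => Nat.iter m f S1_one)) as [p Hp].
  destruct (S1_cluster (fun m => Nat.iter m f p)) as [c Hc].
  destruct (Hc (d / 2) ltac:(lra) 0%nat) as [m1 [_ H1]].
  destruct (Hc (d / 2) ltac:(lra) (S m1)) as [m2 [Hm2 H2]].
  exists (Nat.iter m1 f p), (m2 - m1)%nat; split; [|split; [lia|]].
  - apply nonwandering_iter, (cluster_point_orbit_nonwandering S1_one), Hp.
  - rewrite <- Nat.iter_add, Nat.sub_add by lia.
    pose proof (dist_triangle (Nat.iter m2 f p) c (Nat.iter m1 f p)).
    rewrite (dist_sym c) in *; lra.
Qed.

End Nonwandering.

Lemma ziter_of_nat f g (m : nat) y : ziter f g (Z.of_nat m) y = Nat.iter m f y.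
Proof. destruct m; [reflexivity|]; simpl; rewrite SuccNat2Pos.id_succ; reflexivity. Qed.

Definition periodic_orbit (f : S1 -> S1) (x : S1) (n : nat) (i : Z) : S1 :=
  Nat.iter (Z.to_nat (i mod Z.of_nat n)) f x.

(* Its only jump is f^n x -> x, so it is a delta-pseudo-orbit. *)
Lemma periodic_orbit_pseudo f x n delta :
  (n >= 1)%nat -> dist (Nat.iter n f x) x <= delta -> 0 <= delta ->
  forall i, dist (f (periodic_orbit f x n i)) (periodic_orbit f x n (i + 1)) <= delta.
Proof.
  intros Hn Hx Hd i; unfold periodic_orbit.
  pose proof (Z.mod_pos_bound i (Z.of_nat n) ltac:(lia)) as Hr.
  rewrite <- Z.add_mod_idemp_l by lia; set (r := (i mod Z.of_nat n)%Z) in *.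
  destruct (Z.eq_dec (r + 1) (Z.of_nat n)) as [E|E].
  - rewrite E, Z.mod_same by lia; simpl.
    rewrite <- Nat.iter_succ; replace (S (Z.to_nat r)) with n by lia; lra.
  - rewrite Z.mod_small by lia; replace (Z.to_nat (r + 1)) with (S (Z.to_nat r)) by lia.
    rewrite Nat.iter_succ, dist_self; lra.
Qed.

Lemma shadowed_periodic_orbit f g :
  continuous_S1 f -> POTP_on (nonwandering f) f g ->
  forall eps, 0 < eps -> exists x n y, (n >= 1)%nat /\
    forall m, dist (Nat.iter m f y) (Nat.iter (m mod n) f x) <= eps.
Proof.
  intros Hcf Hpotp eps He.
  destruct (Hpotp eps He) as [delta [Hdel Hsh]].
  destruct (nonwandering_almost_periodic f Hcf delta Hdel) as [x [n [Hx [Hn Hxn]]]].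
  destruct (Hsh (periodic_orbit f x n)) as [y [_ Hy]].
  - intro i; apply nonwandering_iter; auto.
  - apply periodic_orbit_pseudo; auto; lra.
  - exists x, n, y; split; auto; intro m.
    specialize (Hy (Z.of_nat m)); rewrite ziter_of_nat in Hy; unfold periodic_orbit in Hy.
    rewrite <- Nat2Z.inj_mod, Nat2Z.id in Hy; exact Hy.
Qed.

Section ShortArcs.
Variables (f g : S1 -> S1) (eta c : R).
Hypothesis f_homeo : homeo_S1 f g.
Hypothesis f_unif : forall u v, dist u v < eta -> dist (f u) (f v) < 1.
Hypothesis c_lt_eta : c < eta.
Hypothesis c_le_half : c <= 1 / 2.

(* In angle coordinates [f] is continuous and injective on the arc, so the image of a point
   stays between the images of the endpoints. *)
Lemma image_short_arc p q :
  dist p q <= c -> dist (f p) (f q) <= c ->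
  forall r, between 0 (ang p q) r ->
  exists r', between 0 (ang (f p) (f q)) r' /\ f (rot p r) = rot (f p) r'.
Proof.
  intros Hpq Hfpq r Hr; destruct f_homeo as [Hcf [_ [Hgf _]]].
  assert (Dpq : 0 < dot p q) by (apply dot_pos; lra).
  pose proof (ang_bound p q) as Hb; pose proof PI_RGT_0.
  set (a := Rmin 0 (ang p q)); set (b := Rmax 0 (ang p q)).
  assert (Hab : a <= b) by (unfold a, b, Rmin, Rmax; destruct Rle_dec; lra).
  assert (Hrange : forall z, a <= z <= b -> - (PI / 2) <= z <= PI / 2).
  { intros z Hz; unfold a, b, Rmin, Rmax in Hz; destruct Rle_dec; lra. }
  assert (Hdot : forall z, a <= z <= b -> 0 < dot (f p) (f (rot p z))).
  { intros z Hz; apply dot_pos, f_unif; pose proof (dist_rot_between p q z Dpq Hz); lra. }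
  set (phi := fun s => ang (f p) (f (rot p s))).
  assert (Hphi : forall z, a <= z <= b -> f (rot p z) = rot (f p) (phi z))
    by (intros; unfold phi; rewrite rot_ang; auto).
  assert (phi_inj : forall u v, a <= u <= b -> a <= v <= b -> phi u = phi v -> u = v).
  { intros u v Hu Hv E.
    assert (E2 : rot p u = rot p v)
      by (rewrite <- (Hgf (rot p u)), <- (Hgf (rot p v)), !Hphi, E; auto).
    rewrite <- (ang_rot p u (Hrange u Hu)), <- (ang_rot p v (Hrange v Hv)), E2; reflexivity. }
  pose proof (continuous_injective_between phi a b Hab
    (fun z Hz => continuity_pt_ang_comp f (f p) p z Hcf (Hdot z Hz)) phi_inj r Hr) as Hbt.
  assert (P0 : phi 0 = 0) by (unfold phi; rewrite rot_0; apply ang_self).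
  assert (P1 : phi (ang p q) = ang (f p) (f q)) by (unfold phi; rewrite rot_ang; auto).
  exists (phi r); split; [|apply Hphi, Hr].
  rewrite <- P0, <- P1; unfold a, b, Rmin, Rmax in Hbt.
  destruct Rle_dec; [exact Hbt | now apply between_sym].
Qed.

Lemma iter_image_short_arc y1 y2 :
  (forall j, dist (Nat.iter j f y1) (Nat.iter j f y2) <= c) ->
  forall i r, between 0 (ang y1 y2) r ->
  exists r', between 0 (ang (Nat.iter i f y1) (Nat.iter i f y2)) r' /\
             Nat.iter i f (rot y1 r) = rot (Nat.iter i f y1) r'.
Proof.
  intros Hj i; induction i as [|i IH]; intros r Hr; [exists r; auto|].
  destruct (IH r Hr) as [r1 [Hr1 E1]].
  destruct (image_short_arc _ _ (Hj i) (Hj (S i)) r1 Hr1) as [r2 [Hr2 E2]].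
  exists r2; split; auto; simpl; rewrite E1; auto.
Qed.

End ShortArcs.

Section ArcChain.
Variables (h : S1 -> S1) (x : S1) (t : nat -> R).
Hypothesis h_cont : continuous_S1 h.
Hypothesis t_bound : forall k, Rabs (t k) < PI / 2.
Hypothesis t_orbit : forall k, h (rot x (t k)) = rot x (t (S k)).
Hypothesis t_arcs : forall k s, between (t k) (t (S k)) s ->
  exists s', between (t (S k)) (t (S (S k))) s' /\ h (rot x s) = rot x s'.

Lemma fixed_point_of_limit L : Un_cv t L -> h (rot x L) = rot x L.
Proof.
  intro HL; apply dist_eq0, Rle_antisym; [|apply dist_ge0].
  apply Rnot_lt_le; intro Hpos; set (e := dist (h (rot x L)) (rot x L)) in Hpos.
  destruct (h_cont (rot x L) (e / 2) ltac:(lra)) as [rho [Hrho Hc]].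
  destruct (HL (Rmin rho (e / 2)) ltac:(apply Rmin_pos; lra)) as [N HN].
  pose proof (HN N (le_n N)) as A; pose proof (HN (S N) ltac:(lia)) as B; unfold R_dist in A, B.
  pose proof (Rmin_l rho (e / 2)); pose proof (Rmin_r rho (e / 2)).
  pose proof (dist_rot x L (t N)); pose proof (dist_rot x (t (S N)) L).
  rewrite Rabs_minus_sym in A.
  pose proof (Hc (rot x (t N)) ltac:(lra)) as C; rewrite t_orbit in C.
  assert (e <= dist (h (rot x L)) (rot x (t (S N))) + dist (rot x (t (S N))) (rot x L))
    by apply dist_triangle.
  lra.
Qed.

(* If the steps of [t] change sign at [k], the lift [G] of [h] has a fixed point between
   [t k] and [t (S k)] by the intermediate value theorem. *)
Lemma fixed_point_of_turn k :
  (t (S k) - t k) * (t (S (S k)) - t (S k)) <= 0 -> exists w, h w = w.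
Proof.
  intro Hturn; pose proof PI_RGT_0.
  set (G := fun s => ang x (h (rot x s))).
  assert (HG : forall s, between (t k) (t (S k)) s ->
    h (rot x s) = rot x (G s) /\ 0 < dot x (h (rot x s))).
  { intros s Hs; destruct (t_arcs k s Hs) as [s' [Hs' E]].
    pose proof (between_Rabs _ _ _ _ Hs' (t_bound (S k)) (t_bound (S (S k)))) as Bs.
    apply Rabs_def2 in Bs.
    unfold G; rewrite E, ang_rot, dot_rot by lra; split; auto; apply cos_gt_0; lra. }
  assert (Gt : forall j, G (t j) = t (S j)).
  { intro j; unfold G; rewrite t_orbit; apply ang_rot.
    pose proof (t_bound (S j)) as B; apply Rabs_def2 in B; lra. }
  set (lo := Rmin (t k) (t (S k))); set (hi := Rmax (t k) (t (S k))).
  destruct (IVT_interval (fun s => G s - s) lo hi) as [s [Hs Hs0]].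
  - unfold lo, hi, Rmin, Rmax; destruct Rle_dec; lra.
  - intros s Hs; apply continuity_pt_minus; [|apply derivable_continuous_pt, derivable_pt_id].
    apply continuity_pt_ang_comp; auto; apply HG, Hs.
  - unfold lo, hi, Rmin, Rmax; destruct Rle_dec; cbv beta; rewrite (Gt k), (Gt (S k)); lra.
  - exists (rot x s); destruct (HG s Hs) as [E _]; rewrite E; f_equal; lra.
Qed.

Lemma convergent_of_no_turn :
  (forall k, 0 < (t (S k) - t k) * (t (S (S k)) - t (S k))) -> exists L, Un_cv t L.
Proof.
  intro Hnt; set (a := fun k => t (S k) - t k).
  assert (Hsign : forall k, 0 < a 0%nat * a k).
  { intro k; assert (Hstep : forall j, 0 < a j * a (S j)) by exact Hnt.
    induction k as [|k IH]; [pose proof (Hstep 0%nat) as Hk | pose proof (Hstep k) as Hk].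
    - destruct (Rtotal_order (a 0%nat) 0) as [|[|]]; nra.
    - destruct (Rtotal_order (a 0%nat) 0) as [|[|]];
        destruct (Rtotal_order (a k) 0) as [|[|]]; nra. }
  assert (Hbd : forall k, t k < PI / 2 /\ - (PI / 2) < t k) by (intro k; apply Rabs_def2, t_bound).
  destruct (Rle_lt_dec (a 0%nat) 0).
  - destruct (decreasing_cv t) as [L HL]; [| |exists L; auto].
    + intro k; pose proof (Hsign k); assert (a k < 0) by nra; unfold a in *; lra.
    + exists (PI / 2); intros v [k ->]; unfold opp_seq; pose proof (Hbd k); lra.
  - destruct (growing_cv t) as [L HL]; [| |exists L; auto].
    + intro k; pose proof (Hsign k); assert (0 < a k) by nra; unfold a in *; lra.
    + exists (PI / 2); intros v [k ->]; pose proof (Hbd k); lra.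
Qed.

Lemma fixed_point_of_arc_chain : exists w, h w = w.
Proof.
  destruct (classic (exists k, (t (S k) - t k) * (t (S (S k)) - t (S k)) <= 0)) as [[k Hk]|Hnt].
  - exact (fixed_point_of_turn k Hk).
  - destruct convergent_of_no_turn as [L HL].
    + intro k; apply Rnot_le_lt; intro; apply Hnt; eauto.
    + exists (rot x L); apply fixed_point_of_limit, HL.
Qed.

End ArcChain.

Section ShadowedPeriodicOrbit.
Variables (f : S1 -> S1) (x y : S1) (n : nat) (eps : R).
Hypothesis y_shadows : forall m, dist (Nat.iter m f y) (Nat.iter (m mod n) f x) <= eps.

Lemma shadow_returns k : dist x (Nat.iter (k * n) f y) <= eps.
Proof.
  pose proof (y_shadows (k * n)) as H; rewrite Nat.Div0.mod_mul in H.
  rewrite dist_sym; exact H.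
Qed.

Lemma shadow_blocks_close k i :
  dist (Nat.iter i f (Nat.iter (k * n) f y)) (Nat.iter i f (Nat.iter (S k * n) f y)) <= 2 * eps.
Proof.
  rewrite <- !Nat.iter_add.
  pose proof (y_shadows (i + k * n)) as A; pose proof (y_shadows (i + S k * n)) as B.
  rewrite Nat.Div0.mod_add in A, B; rewrite dist_sym in B.
  pose proof (dist_triangle (Nat.iter (i + k * n) f y) (Nat.iter (i mod n) f x)
    (Nat.iter (i + S k * n) f y)); lra.
Qed.

End ShadowedPeriodicOrbit.

(* The returns [z k = f^(kn) y], seen from [x] at angles [t k], form an arc chain for [f^n]:
   consecutive returns stay close along their whole orbits, so [iter_image_short_arc] applies. *)
Lemma periodic_point_of_shadowed_orbit f g eta eps x n y :
  homeo_S1 f g -> (forall u v, dist u v < eta -> dist (f u) (f v) < 1) ->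
  2 * eps < eta -> eps <= 1 / 4 ->
  (forall m, dist (Nat.iter m f y) (Nat.iter (m mod n) f x) <= eps) ->
  exists w, Nat.iter n f w = w.
Proof.
  intros Hf Hu Heta Heps Hy; pose proof PI_RGT_0.
  set (z := fun k => Nat.iter (k * n) f y).
  assert (Hzn : forall k, Nat.iter n f (z k) = z (S k))
    by (intro k; unfold z; rewrite <- Nat.iter_add; reflexivity).
  assert (Hzx : forall k, dist x (z k) <= eps) by exact (shadow_returns f x y n eps Hy).
  assert (Hzz : forall k i, dist (Nat.iter i f (z k)) (Nat.iter i f (z (S k))) <= 2 * eps)
    by exact (shadow_blocks_close f x y n eps Hy).
  assert (Dxz : forall k, 0 < dot x (z k))
    by (intro k; apply dot_pos; pose proof (Hzx k); lra).
  assert (Dzz : forall k, 0 < dot (z k) (z (S k)))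
    by (intro k; apply dot_pos; pose proof (Hzz k 0%nat); simpl in *; lra).
  set (t := fun k => ang x (z k)).
  assert (Bt : forall k, Rabs (t k) < PI / 4) by (intro k; apply ang_small; pose proof (Hzx k); lra).
  assert (Ba : forall k, Rabs (ang (z k) (z (S k))) < PI / 4)
    by (intro k; apply ang_small; pose proof (Hzz k 0%nat); simpl in *; lra).
  assert (Ta : forall k, t (S k) = t k + ang (z k) (z (S k)))
    by (intro k; apply ang_add; [apply Dxz | apply Dzz | apply Bt | apply Ba]).
  assert (Ez : forall k, rot x (t k) = z k) by (intro k; apply rot_ang; auto).
  apply (fixed_point_of_arc_chain (Nat.iter n f) x t).
  - apply continuous_iter; apply Hf.
  - intro k; pose proof (Bt k); lra.
  - intro k; rewrite !Ez; apply Hzn.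
  - intros k s Hs; rewrite (Ta k) in Hs.
    replace s with (t k + (s - t k)) in Hs by ring; apply between_shift in Hs.
    destruct (iter_image_short_arc f g eta (2 * eps) Hf Hu ltac:(lra) ltac:(lra)
                (z k) (z (S k)) (Hzz k) n (s - t k) Hs) as [r' [Hr' E]].
    rewrite !Hzn in Hr'; rewrite Hzn in E.
    exists (t (S k) + r'); split.
    + rewrite (Ta (S k)); apply between_shift, Hr'.
    + rewrite <- rot_rot, Ez, <- E, <- Ez, rot_rot.
      replace (t k + (s - t k)) with s by ring; reflexivity.
Qed.

Theorem corollary2 (f g : S1 -> S1) (Hf : homeo_S1 f g)
  (Hpotp : POTP_on (nonwandering f) f g) :
  exists (x : S1) (n : nat), (n >= 1)%nat /\ Nat.iter n f x = x.
Proof.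
  pose proof Hf as [Hcf _].
  destruct (uniform_continuity f Hcf 1 ltac:(lra)) as [eta [Heta Hu]].
  set (eps := Rmin (eta / 4) (1 / 4)).
  assert (Heps : 0 < eps) by (apply Rmin_pos; lra).
  destruct (shadowed_periodic_orbit f g Hcf Hpotp eps Heps) as [x [n [y [Hn Hy]]]].
  destruct (periodic_point_of_shadowed_orbit f g eta eps x n y Hf Hu) as [w Hw]; auto.
  - pose proof (Rmin_l (eta / 4) (1 / 4)); unfold eps; lra.
  - apply Rmin_r.
  - exists w, n; auto.
Qed.
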